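(* Every finite graph is isomorphic to an induced subgraph of the enhanced power graph of some finite group, and this group can be taken to be abelian.
   Context: The enhanced power graph of a group $G$ has vertex set $G$, distinct $x,y$ adjacent iff $\langle x,y\rangle$ is cyclic. *)

From mathcomp Require Import all_boot all_fingroup all_solvable.
Set Implicit Arguments. Unset Strict Implicit. Unset Printing Implicit Defensive.
Import GroupScope.

Definition simple_graph (V : finType) (adj : rel V) : Prop :=
  symmetric adj /\ irreflexive adj.

Definition epg_adj (gT : finGroupType) : rel gT :=
  fun x y => (x != y) && cyclic <<[set x; y]>>.

Definition induced_subgraph_embedding (V W : finType) (adj : rel V)
    (adjW : rel W) (f : V -> W) : Prop :=
  injective f /\ forall x y : V, adj x y = adjW (f x) (f y).

From mathcomp Require Import all_boot all_fingroup all_solvable zmodp.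
Set Implicit Arguments. Unset Strict Implicit. Unset Printing Implicit Defensive.

(* Give every ordered non-adjacent pair (a, b) of vertices, the pairs (a, a)
   included, its own prime p_ab, and let N be the product of these primes.
   Send u to (x_u, y_u) in Z_N * Z_N, where x_u has order the product of the
   p_ub and y_u the product of the p_au.  Adjacent vertices involve disjoint
   sets of primes, so their images have coprime orders and generate a cyclic
   group.  For distinct non-adjacent u and v, the p_uv-components of their
   images are (x, 1) and (1, y), both of order p_uv, and these generate
   Z_p * Z_p, which is not cyclic.  The primes p_aa make the map injective. *)

Fixpoint nth_prime (k : nat) : nat :=
  if k is k'.+1 then s2val (prime_above (nth_prime k')) else 2.

Lemma nth_prime_prime k : prime (nth_prime k).
Proof. by case: k => [|k] //=; case: prime_above. Qed.

Lemma nth_prime_inj : injective nth_prime.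
Proof.
apply/incn_inj/leq_mono/(homo_ltn ltn_trans) => k /=.
by case: prime_above.
Qed.

Section TwoGenerated.
Local Open Scope group_scope.
Variable gT : finGroupType.
Implicit Types x y : gT.

Lemma cyclic_gen2_coprime x y :
  commute x y -> coprime #[x] #[y] -> cyclic <<[set x; y]>>.
Proof.
move=> cxy co_xy; apply: cyclicS (cycle_cyclic (x * y)).
rewrite gen_subG subUset !sub1set /= cycleM //.
by rewrite (subsetP (mulG_subl _ _)) ?(subsetP (mulG_subr _ _)) ?cycle_id.
Qed.

Lemma cyclic_gen2X x y k :
  cyclic <<[set x; y]>> -> cyclic <<[set x ^+ k; y ^+ k]>>.
Proof.
by apply: cyclicS; rewrite gen_subG subUset !sub1set !groupX ?mem_gen ?set21 ?set22.
Qed.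

Lemma cyclic_gen2_cycle_eq x y :
  cyclic <<[set x; y]>> -> #[x] = #[y] -> <[x]> = <[y]>.
Proof.
move=> cyc eq_xy; apply/eqP.
by rewrite (eq_subG_cyclic cyc) ?cycle_subG ?mem_gen ?set21 ?set22 //; apply/eqP.
Qed.

End TwoGenerated.

Section PairGroup.
Local Open Scope group_scope.
Variables gT1 gT2 : finGroupType.
Implicit Types (a : gT1) (b : gT2).

Lemma expg_pair a b n : (a, b) ^+ n = (a ^+ n, b ^+ n).
Proof. by elim: n => // n IHn; rewrite !expgS IHn. Qed.

Lemma order_pair a b : #[(a, b)] = lcmn #[a] #[b].
Proof.
have pair_eq1 n : ((a, b) ^+ n == 1) = (#[a] %| n) && (#[b] %| n).
  by rewrite expg_pair -pair_eqE /= !order_dvdn.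
apply/eqP; rewrite eqn_dvd order_dvdn pair_eq1 dvdn_lcml dvdn_lcmr /=.
by rewrite dvdn_lcm -pair_eq1 expg_order.
Qed.

Lemma abelian_pairT :
  abelian [set: gT1] -> abelian [set: gT2] -> abelian [set: gT1 * gT2].
Proof.
move=> /centsP ab1 /centsP ab2; apply/centsP => [[a1 b1] _ [a2 b2] _].
by rewrite /commute; congr (_, _); [apply: ab1 | apply: ab2]; rewrite inE.
Qed.

Lemma not_cyclic_gen2_pair a b :
  a != 1 -> #[a] = #[b] -> ~~ cyclic <<[set (a, 1); (1, b)]>>.
Proof.
move=> a_nt eq_ab; apply/negP => cyc.
have: (a, 1) \in <[(1, b)]>.
  by rewrite -(cyclic_gen2_cycle_eq cyc) ?cycle_id // !order_pair !order1 lcmn1 lcm1n.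
case/cycleP => n; rewrite expg_pair expg1n => -[a1 _].
by rewrite a1 eqxx in a_nt.
Qed.

End PairGroup.

Section PrimeSupport.
Variables (I : finType) (p : I -> nat).
Hypotheses (p_prime : forall i, prime (p i)) (p_inj : injective p).
Implicit Types P Q : pred I.

Definition primes_prod P := \prod_(i | P i) p i.

Local Notation N := (primes_prod predT).

(* Z/N, written 'I_N.-1.+1 (which is 'I_N as N > 0) to get the Zp group. *)
Local Notation Z_N := 'I_N.-1.+1.

Lemma primes_prod_gt0 P : 0 < primes_prod P.
Proof. by rewrite prodn_gt0 // => i; apply: prime_gt0. Qed.

Lemma primes_prodC P : primes_prod (predC P) * primes_prod P = N.
Proof. by rewrite mulnC /primes_prod [in RHS](bigID P) /=. Qed.

Lemma dvdn_primes_prod P i : (p i %| primes_prod P) = P i.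
Proof.
apply/idP/idP => [|Pi]; last by rewrite /primes_prod (bigD1 i) ?dvdn_mulr.
rewrite Euclid_dvd_prod // big_has_cond => /hasP[j _ /andP[Pj]].
by rewrite dvdn_prime2 // => /eqP/p_inj->.
Qed.

Lemma dvdn_primes_prodS P Q : (primes_prod P %| primes_prod Q) = (P \subset Q).
Proof.
apply/idP/subsetP => [dvPQ i Pi | sPQ].
  by rewrite -[_ \in Q](dvdn_primes_prod Q) (dvdn_trans _ dvPQ) ?dvdn_primes_prod.
rewrite /primes_prod [in X in _ %| X](bigID P) /= dvdn_mulr //.
by rewrite (eq_bigl P) // => i; apply/andb_idl/sPQ.
Qed.

Lemma coprime_primes_prod P Q :
  [disjoint P & Q] -> coprime (primes_prod P) (primes_prod Q).
Proof.
move=> dPQ; apply: (big_ind (coprime^~ _)) => [|m n|i Pi]; first exact: coprime1n.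
  by rewrite coprimeMl => -> ->.
by rewrite prime_coprime // dvdn_primes_prod -[Q i]/(i \in Q) (disjointFr dPQ).
Qed.

Definition support_elt P : Z_N := inZp (primes_prod (predC P)).

Lemma val_inZp_N a : val (inZp a : Z_N) = a %% N.
Proof. by rewrite /= prednK ?primes_prod_gt0. Qed.

Lemma support_elt_expg_eq1 P n : (support_elt P ^+ n == 1)%g = (primes_prod P %| n).
Proof.
rewrite Zp_expg -val_eqE !val_inZp_N modnMml -/(dvdn _ _) -(primes_prodC P).
by rewrite dvdn_pmul2l ?primes_prod_gt0.
Qed.

Lemma order_support_elt P : #[support_elt P]%g = primes_prod P.
Proof.
apply/eqP; rewrite eqn_dvd order_dvdn support_elt_expg_eq1 dvdnn.
by rewrite -support_elt_expg_eq1 expg_order.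
Qed.

Lemma support_elt_inj P Q : support_elt P = support_elt Q -> P =1 Q.
Proof.
move=> eqPQ i; rewrite -(dvdn_primes_prod P) -(dvdn_primes_prod Q).
by rewrite -(order_support_elt P) -(order_support_elt Q) eqPQ.
Qed.

(* [primes_prod (predC1 i)] is N %/ p i: this power keeps the p i-component. *)
Lemma support_elt_expg_cofactor_eq1 P i :
  ~~ P i -> (support_elt P ^+ primes_prod (predC1 i) = 1)%g.
Proof.
move=> nPi; apply/eqP; rewrite support_elt_expg_eq1 dvdn_primes_prodS.
by apply/subsetP => j Pj; apply: contraNneq nPi => <-.
Qed.

Lemma order_support_elt_cofactor P i :
  P i -> #[support_elt P ^+ primes_prod (predC1 i)]%g = p i.
Proof.
move=> Pi; apply/prime_nt_dvdP => //.
  rewrite order_eq1 support_elt_expg_eq1 dvdn_primes_prodS.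
  by apply/subsetPn; exists i; rewrite ?inE ?eqxx.
rewrite order_dvdn -expgM support_elt_expg_eq1.
have ->: primes_prod (predC1 i) * p i = N.
  by rewrite mulnC /primes_prod [in RHS](bigD1 i).
by rewrite dvdn_primes_prodS subset_predT.
Qed.

End PrimeSupport.

Section EnhancedPowerGraphEmbedding.
Variables (V : finType) (adj : rel V).
Hypotheses (adj_sym : symmetric adj) (adj_irr : irreflexive adj).

Definition pair_prime (i : V * V) : nat := nth_prime (enum_rank i).

Lemma pair_prime_prime i : prime (pair_prime i).
Proof. exact: nth_prime_prime. Qed.

Lemma pair_prime_inj : injective pair_prime.
Proof. by move=> i j /nth_prime_inj/val_inj/enum_rank_inj. Qed.

Local Notation prodp := (primes_prod pair_prime).
Local Notation elt := (support_elt pair_prime).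
Local Notation Z_N := 'I_(prodp predT).-1.+1.

Definition nonadj_out u : pred (V * V) := [pred i | (i.1 == u) && ~~ adj i.1 i.2].
Definition nonadj_in u : pred (V * V) := [pred i | (i.2 == u) && ~~ adj i.1 i.2].
Definition nonadj_at u : pred (V * V) := [predU nonadj_out u & nonadj_in u].

Definition epg_vertex u : Z_N * Z_N := (elt (nonadj_out u), elt (nonadj_in u)).

Lemma epg_vertex_inj : injective epg_vertex.
Proof.
move=> u v /(congr1 fst)/(support_elt_inj pair_prime_prime pair_prime_inj)/(_ (u, u)).
by rewrite /nonadj_out /= eqxx adj_irr /= andbT => /esym/eqP.
Qed.

Lemma order_epg_vertex_dvdn u : #[epg_vertex u]%g %| prodp (nonadj_at u).
Proof.
rewrite order_pair !(order_support_elt pair_prime_prime) dvdn_lcm.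
rewrite !(dvdn_primes_prodS pair_prime_prime pair_prime_inj).
by apply/andP; split; apply/subsetP => i; rewrite !inE => ->; rewrite ?orbT.
Qed.

Lemma nonadj_at_disjoint u v : adj u v -> [disjoint nonadj_at u & nonadj_at v].
Proof.
move=> uv; apply/pred0P => -[a b]; rewrite !inE /=; apply/negP.
case/andP => /orP[] /andP[/eqP-> nadj] /orP[] /andP[/eqP eq_v _].
- by rewrite eq_v adj_irr in uv.
- by rewrite -eq_v (negPf nadj) in uv.
- by rewrite eq_v adj_sym uv in nadj.
- by rewrite eq_v adj_irr in uv.
Qed.

Lemma cyclic_epg_vertex_adj u v :
  adj u v -> cyclic <<[set epg_vertex u; epg_vertex v]>>.
Proof.
move=> uv; apply: cyclic_gen2_coprime.
  by apply: (centsP (abelian_pairT (Zp_abelian _) (Zp_abelian _))); rewrite inE.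
apply: coprime_dvdl (order_epg_vertex_dvdn u) _.
apply: coprime_dvdr (order_epg_vertex_dvdn v) _.
exact: coprime_primes_prod pair_prime_prime pair_prime_inj _ _ (nonadj_at_disjoint uv).
Qed.

Lemma not_cyclic_epg_vertex_nonadj u v :
  u != v -> ~~ adj u v -> ~~ cyclic <<[set epg_vertex u; epg_vertex v]>>.
Proof.
move=> neq_uv nuv.
have out_u : nonadj_out u (u, v) by rewrite /nonadj_out /= eqxx.
have in_v : nonadj_in v (u, v) by rewrite /nonadj_in /= eqxx.
have notin_u : ~~ nonadj_in u (u, v) by rewrite /nonadj_in /= eq_sym (negPf neq_uv).
have notout_v : ~~ nonadj_out v (u, v) by rewrite /nonadj_out /= (negPf neq_uv).
apply: contra (cyclic_gen2X (prodp (predC1 (u, v)))) _; rewrite !expg_pair.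
rewrite (support_elt_expg_cofactor_eq1 pair_prime_prime pair_prime_inj notin_u).
rewrite (support_elt_expg_cofactor_eq1 pair_prime_prime pair_prime_inj notout_v).
apply: not_cyclic_gen2_pair.
  rewrite -order_eq1 (order_support_elt_cofactor pair_prime_prime pair_prime_inj) //.
  by rewrite eqn_leq leqNgt prime_gt1 ?pair_prime_prime.
by rewrite !(order_support_elt_cofactor pair_prime_prime pair_prime_inj).
Qed.

Lemma epg_adj_vertex u v : epg_adj (epg_vertex u) (epg_vertex v) = adj u v.
Proof.
rewrite /epg_adj (inj_eq epg_vertex_inj).
have [<-|neq_uv] := eqVneq u v; first by rewrite adj_irr.
have [uv|nuv] := boolP (adj u v); first exact: cyclic_epg_vertex_adj.
by rewrite (negPf (not_cyclic_epg_vertex_nonadj neq_uv nuv)).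
Qed.

End EnhancedPowerGraphEmbedding.

Theorem mainTheorem10 (V : finType) (adj : rel V) :
  simple_graph adj ->
  exists (gT : finGroupType) (f : V -> gT),
    abelian [set: gT] /\ induced_subgraph_embedding adj (@epg_adj gT) f.
Proof.
move=> [adj_sym adj_irr]; exists _, (epg_vertex adj).
split; first exact: abelian_pairT (Zp_abelian _) (Zp_abelian _).
split; first exact: epg_vertex_inj.
by move=> u v; rewrite epg_adj_vertex.
Qed.
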